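(* Consider the following percolation on $[L]\times\{0,1,2,\dots\}$: the edges joining $(i,0)$ and $(i+1,0)$ are open for all $i$; if $(i,t)$ belongs to an open edge, then with probability at least $0.99$ the edges joining $(i,t)$ to $(i,t+1)$ and to $(i\pm1,t+1)$ are all open, these events occurring independently. Then with probability tending to $1$ as $L\to\infty$, the percolation reaches time $1.01^L$: there exists a path of open edges connecting some vertex $(i,0)$ and some vertex $(j,1.01^L)$ with $i,j\in[L]$. *)

From mathcomp Require Import all_boot all_order all_algebra.
From mathcomp Require Import all_classical all_reals all_analysis.
Set Implicit Arguments. Unset Strict Implicit. Unset Printing Implicit Defensive.
Import Order.TTheory GRing.Theory Num.Theory.
Local Open Scope classical_set_scope.
Local Open Scope ring_scope.

Definition mutually_independent d (T : measurableType d) (R : realType)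
  (P : probability T R) (I : eqType) (A : I -> set T) : Prop :=
  forall s : seq I, uniq s ->
    P (\big[setI/setT]_(k <- s) A k) = (\prod_(k <- s) fine (P (A k)))%:E.

(* Vertices of [L] x {0,1,2,...}; [L] is represented by 'I_L = {0,...,L-1}. *)
Definition vertex (L : nat) := ('I_L * nat)%type.

Definition near1 (L : nat) (i j : 'I_L) : bool :=
  (nat_of_ord i <= (nat_of_ord j).+1)%N && (nat_of_ord j <= (nat_of_ord i).+1)%N.

(* The percolation driven by the events A i t (the "good" event at (i,t)):
   [incident A w i t] means that in outcome w the vertex (i,t) belongs to an
   open edge.  At time 0 this holds iff there is a horizontal edge, i.e.
   L >= 2.  At time t+1 it holds iff some upward edge from (i',t), |i-i'|<=1,
   is open, and such an edge is open iff (i',t) belongs to an open edge and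
   the event A i' t occurs. *)
Fixpoint incident (T : Type) (L : nat) (A : 'I_L -> nat -> set T) (w : T)
    (i : 'I_L) (t : nat) : Prop :=
  match t with
  | 0 => (1 < L)%N
  | t'.+1 => exists i' : 'I_L, near1 i' i /\ incident A w i' t' /\ A i' t' w
  end.

Definition open_up (T : Type) (L : nat) (A : 'I_L -> nat -> set T) (w : T)
    (i : 'I_L) (t : nat) (i' : 'I_L) : Prop :=
  near1 i i' /\ incident A w i t /\ A i t w.

Definition open_edge (T : Type) (L : nat) (A : 'I_L -> nat -> set T) (w : T)
    (u v : vertex L) : Prop :=
  (u.2 = 0%N /\ v.2 = 0%N /\
     ((nat_of_ord u.1).+1 = nat_of_ord v.1 \/ (nat_of_ord v.1).+1 = nat_of_ord u.1))
  \/ (v.2 = u.2.+1 /\ open_up A w u.1 u.2 v.1)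
  \/ (u.2 = v.2.+1 /\ open_up A w v.1 v.2 u.1).

(* A path is x = x_0, x_1, ..., x_n
   given as x :: s, with consecutive vertices joined by open edges. *)
Definition reaches (R : realType) (T : Type) (L : nat)
    (A : 'I_L -> nat -> set T) : set T :=
  [set w | exists (x : vertex L) (s : seq (vertex L)),
     x.2 = 0%N /\
     ((101 / 100 : R) ^+ L <= ((last x s).2)%:R) /\
     (forall k : nat, (k < size s)%N ->
        open_edge A w (nth x (x :: s) k) (nth x s k))].

From mathcomp Require Import all_boot all_order all_algebra.
From mathcomp Require Import all_classical all_reals all_analysis.
From mathcomp Require Import zify ring lra.
Import Order.TTheory GRing.Theory Num.Theory.
Set Implicit Arguments. Unset Strict Implicit. Unset Printing Implicit Defensive.

(** Call a column alive at time t when its site (x, t) lies on an open edge, and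
    a site closed when its event fails.  If every column is dead at time t, the
    closed sites of times at most t contain a chain from column 0 to column L - 1
    whose consecutive sites (x, s), (y, s') satisfy y + |s - s'| <= x + 1.  It is
    built by induction on time: one step below a maximal interval of dead columns
    there are only closed sites and dead intervals, and the chains of the latter
    glue together by the triangle inequality.  After removing loops the sites of
    a chain are distinct, so it is closed with probability at most 100^-(length).
    Weighting column x by 4^-(L - x), the total weight of the next sites of a
    chain is at most 16 times the weight of its current site, so the chains from
    a given starting site contribute at most 4^-L / 20.  Summing over the
    2^L + 1 starting times bounds the extinction probability at time 2^L by 2^-L,
    and survival up to time 2^L >= 1.01^L yields the required open path. *)

Definition blocks (u v : nat * nat) := v.1 + ((u.2 - v.2) + (v.2 - u.2)) <= u.1.+1.

Lemma blocks_glue m s u v : blocks u (m.+1, s) -> blocks (m, s) v -> blocks u v.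
Proof. by rewrite /blocks /=; lia. Qed.

Section Blocking.
Variable L : nat.
Variables alive good : nat -> nat -> Prop.

Definition open_site x s := [/\ x < L, alive x s & good x s].
Definition dead x s := x < L /\ ~ alive x s.
Definition closed_site (v : nat * nat) := v.1 < L /\ ~ good v.1 v.2.

(* [lbound s q v]: [v] may start a chain covering the columns from [q] on at
   time [s]; on the wall [q = 0] only the column of [v] is constrained.
   [rbound] is the mirror condition at the right end. *)
Definition lbound s q v := if 0 < q then blocks (q.-1, s) v else v.1 <= q.
Definition rbound s r v := if r.+1 < L then blocks v (r.+1, s) else r <= v.1.

Definition blocking s q r c0 (c : seq (nat * nat)) :=
  [/\ {in c0 :: c, forall v, closed_site v /\ v.2 <= s}, path blocks c0 c,
      lbound s q c0 & rbound s r (last c0 c)].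

(* The alive (or wall) neighbours make [p..r] a maximal dead interval. *)
Definition dead_blocked t := forall p r, p <= r -> r < L ->
  (forall x, p <= x <= r -> dead x t) ->
  (p = 0 \/ alive p.-1 t) -> (r.+1 = L \/ alive r.+1 t) ->
  exists c0 c, blocking t p r c0 c.

Hypothesis alive0 : forall x, x < L -> alive x 0.
Hypothesis alive_succ : forall x s, x < L ->
  alive x s.+1 <-> exists y, [/\ y <= x.+1, x <= y.+1 & open_site y s].

Lemma dead_succ x y s : dead x s.+1 -> y <= x.+1 -> x <= y.+1 -> ~ open_site y s.
Proof. by case=> xL nal xy yx oy; apply/nal/(alive_succ _ xL); exists y. Qed.

Lemma blocking1 q s : q < L -> ~ good q s -> blocking s q q (q, s) [::].
Proof.
move=> qL gq; split=> //=; first by move=> v; rewrite inE => /eqP ->.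
  by rewrite /lbound /blocks; case: ifP => /=; lia.
by rewrite /rbound /blocks; case: ifP => /=; lia.
Qed.

Lemma blocking_cat s q b r c0 c d0 d : b.+1 < L ->
  blocking s q b c0 c -> blocking s b.+1 r d0 d ->
  blocking s q r c0 (c ++ d0 :: d).
Proof.
move=> bL [cc pc lc rc] [cd pd ld rd]; split => //; last by rewrite last_cat.
  by move=> v; rewrite -cat_cons mem_cat => /orP[/cc | /cd].
rewrite cat_path pc /= pd andbT.
by rewrite /rbound bL in rc; apply: blocks_glue rc ld.
Qed.

Lemma dead_run s q r : q <= r -> r < L -> dead q s ->
  exists2 b, q <= b <= r & (forall x, q <= x <= b -> dead x s) /\ (b = r \/ alive b.+1 s).
Proof.
elim: r => [|r IH] qr rL dq.
  by exists q; [lia | split; [move=> x hx; have -> : x = q by lia | left; lia]].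
have [qr1|ltqr] := eqVneq q r.+1.
  by subst q; exists r.+1; [lia | split; [move=> x hx; have -> : x = r.+1 by lia | left]].
have [b qbr [db [br|ab]]] := IH ltac:(lia) ltac:(lia) dq; last first.
  by exists b; [lia | split; [|right]].
subst b.
have [ar|nar] := pselect (alive r.+1 s); first by exists r; [lia | split; [|right]].
exists r.+1; [lia | split; last by left].
move=> x hx; have [xr|->] : x <= r \/ x = r.+1 by lia.
  by apply: db; lia.
by split.
Qed.

Lemma blocking_of_closed s : dead_blocked s -> forall q r, q <= r -> r < L ->
  (forall x, q <= x <= r -> ~ open_site x s) ->
  (q = 0 \/ alive q.-1 s \/ alive q s) -> (r.+1 = L \/ alive r.+1 s \/ alive r s) ->
  exists c0 c, blocking s q r c0 c.
Proof.
move=> blocked q r qr rL cl lq rq.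
move: (ltnSn (r - q)); move: {2}(r - q).+1 => n.
elim: n q qr cl lq => [//|n IH] q qr cl lq lt_rq.
have [aq|naq] := pselect (alive q s).
  have Bq : blocking s q q (q, s) [::].
    by apply: blocking1; [lia | move=> gq; apply: (cl q); [lia | split => //; lia]].
  have [<-|ltqr] := eqVneq q r; first by exists (q, s), [::].
  have [d0 [d Bd]] := IH q.+1 ltac:(lia) (fun x hx => cl x ltac:(lia)) ltac:(by right; left) ltac:(lia).
  by exists (q, s), (d0 :: d); apply: blocking_cat Bq Bd; lia.
have dq : dead q s by split => //; lia.
have [b qbr [db ab]] := dead_run qr rL dq.
have lq' : q = 0 \/ alive q.-1 s by case: lq => [|[|]]; [left|right|].
have [c0 [c Bc]] : exists c0 c, blocking s q b c0 c.
  apply: blocked => //; try lia.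
  case: ab => [br|ab]; last by right.
  by subst b; case: rq => [|[|ar]]; [left|right|case: (db r) => //; lia].
case: ab => [br|ab]; first by exists c0, c; rewrite -br.
have [brr|ltbr] := eqVneq b r; first by exists c0, c; rewrite -brr.
have [d0 [d Bd]] := IH b.+1 ltac:(lia) (fun x hx => cl x ltac:(lia)) ltac:(by right; right) ltac:(lia).
by exists c0, (c ++ d0 :: d); apply: blocking_cat Bc Bd; lia.
Qed.

Lemma lbound_succ s p v : p = 0 \/ 0 < p.-1 -> lbound s p.-1 v -> lbound s.+1 p v.
Proof. by rewrite /lbound /blocks /=; case: ifP; case: ifP; lia. Qed.

Lemma rbound_succ s r v : r < L -> r.+1 = L \/ r.+2 < L ->
  rbound s (minn r.+1 L.-1) v -> rbound s.+1 r v.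
Proof. by rewrite /rbound /blocks /=; case: ifP; case: ifP; lia. Qed.

Lemma dead_blocked_succ s : dead_blocked s -> dead_blocked s.+1.
Proof.
move=> blocked p r pr rL dpr lp rp.
(* One step below, the window [p-1 .. r+1] has no open site, and its
   neighbours are alive or walls. *)
have cl x : p.-1 <= x <= minn r.+1 L.-1 -> ~ open_site x s.
  by move=> hx; apply: (dead_succ (x := minn (maxn x p) r)); [apply: dpr|..]; lia.
have lp' : p = 0 \/ 0 < p.-1 /\ alive p.-2 s.
  have [->|p0] := posnP p; first by left.
  case: lp => [|ap]; [lia | right].
  have [y [y1 y2 oy]] := (@alive_succ p.-1 s ltac:(lia)).1 ap.
  have yp : y < p.-1 by rewrite ltnNge; apply/negP => h; apply: (cl y) oy; lia.
  by case: oy => _ ay _; split; [lia | have <- : y = p.-2 by lia].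
have rp' : r.+1 = L \/ r.+2 < L /\ alive r.+2 s.
  have [rL1|rL1] : r.+1 = L \/ r.+1 < L by lia.
    by left.
  case: rp => [|ar]; [lia | right].
  have [y [y1 y2 oy]] := (@alive_succ r.+1 s ltac:(lia)).1 ar.
  have ry : r.+1 < y by rewrite ltnNge; apply/negP => h; apply: (cl y) oy; lia.
  by case: oy => yL ay _; split; [lia | have <- : y = r.+2 by lia].
have lq : p.-1 = 0 \/ alive p.-1.-1 s \/ alive p.-1 s.
  by case: lp' => [->|[_ ap]]; [left | right; left].
have rq : (minn r.+1 L.-1).+1 = L \/ alive (minn r.+1 L.-1).+1 s \/ alive (minn r.+1 L.-1) s.
  case: rp' => [rL1|[rL2 ar]]; first by left; lia.
  by right; left; have -> : (minn r.+1 L.-1).+1 = r.+2 by lia.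
have [c0 [c [cc pc lc rc]]] := blocking_of_closed blocked
  (q := p.-1) (r := minn r.+1 L.-1) ltac:(lia) ltac:(lia) cl lq rq.
exists c0, c; split => //.
- by move=> v /cc [? ?]; split => //; lia.
- by apply: lbound_succ => //; case: lp' => [|[]]; [left | right].
- by apply: rbound_succ => //; case: rp' => [|[]]; [left | right].
Qed.

Lemma dead_blocked_all t : dead_blocked t.
Proof.
elim: t => [|s IH]; last exact: dead_blocked_succ.
by move=> p r pr rL /(_ p) [|_ []]; [lia | apply: alive0; lia].
Qed.

Lemma extinct_crossing t : 0 < L -> (forall x, x < L -> ~ alive x t) ->
  exists c0 c, [/\ c0.1 = 0, (last c0 c).1 = L.-1, path blocks c0 c,
    uniq (c0 :: c) & {in c0 :: c, forall v, closed_site v /\ v.2 <= t}].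
Proof.
move=> L0 dead_all.
have dead_row x : 0 <= x <= L.-1 -> dead x t by move=> hx; split; [|apply: dead_all]; lia.
have ltnL : L.-1 < L by rewrite ltn_predL.
have [c0 [c [cc pc lc rc]]] := dead_blocked_all (leq0n L.-1) ltnL dead_row
  (or_introl erefl) (or_introl (prednK L0)).
have [[lastL _] _] := cc _ (mem_last c0 c).
move: rc lastL; rewrite /rbound ifN; last by lia.
case: (shortenP pc) => c' pc' uc' sub rc lastL.
exists c0, c'; split => //; first by move: lc; rewrite /lbound /=; lia.
  by apply/eqP; rewrite eqn_leq rc andbT -ltnS prednK.
by move=> v; rewrite inE => /predU1P [->|/sub vc]; apply: cc; rewrite inE ?eqxx ?vc ?orbT.
Qed.

End Blocking.

Local Open Scope ring_scope.

Section Crossings.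
Variables (R : realFieldType) (L T : nat).

Definition sites := [seq (x, s) | x <- iota 0 L, s <- iota 0 T].
Definition successors v := [seq w <- sites | blocks v w].

Fixpoint crossings n v : seq (seq (nat * nat)) :=
  if n is n'.+1 then
    (if v.1.+1 == L then [:: [:: v]] else [::]) ++
    [seq v :: c | w <- successors v, c <- crossings n' w]
  else [::].

Definition weight x : R := 4^-1 ^+ (L - x).

Lemma mem_sites u : (u.1 < L)%N -> (u.2 < T)%N -> u \in sites.
Proof.
by case: u => x s /= xL sT; apply/allpairsP; exists (x, s); rewrite !mem_iota.
Qed.

Lemma size_sites : size sites = (L * T)%N.
Proof. by rewrite size_allpairs !size_iota. Qed.

Lemma mem_successors v w : w \in successors v -> (w.1 < L)%N.
Proof. by rewrite mem_filter => /andP[_ /allpairsP[[x s] [/= + _ ->]]]; rewrite mem_iota. Qed.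

Lemma count_blocks v x : (count (fun s => blocks v (x, s)) (iota 0 T) <=
  if x <= v.1.+1 then (2 * (v.1.+1 - x)).+1 else 0)%N.
Proof.
case: ifP => hx; last first.
  by rewrite leqn0 -/(nilp _) -size_filter size_eq0 -[_ == _]negbK -has_filter;
     apply/hasPn => s _; rewrite /blocks /=; lia.
rewrite -size_filter -[X in (_ <= X)%N](size_iota (v.2 - (v.1.+1 - x))).
apply: uniq_leq_size; first exact/filter_uniq/iota_uniq.
by move=> s; rewrite mem_filter !mem_iota /blocks => /andP[/= ? _]; lia.
Qed.

Lemma sum_halves_le (c n : nat) :
  \sum_(x <- iota 0 n) (if (x <= c)%N then 2^-1 ^+ (c - x) else 0) <= 2 * 2^-1 ^+ (c.+1 - n) :> R.
Proof.
elim: n => [|n IH]; first by rewrite big_nil mulr_ge0 ?exprn_ge0 ?invr_ge0.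
rewrite -addn1 iotaD big_cat big_seq1 /= add0n.
case: leqP => [nc | cn]; last by rewrite addr0 (_ : c.+1 - (n + 1) = c.+1 - n)%N //; lia.
rewrite (_ : c.+1 - n = (c - n).+1)%N ?exprS in IH; last by lia.
rewrite (_ : c.+1 - (n + 1) = c - n)%N; last by lia.
have : 0 <= 2^-1 ^+ (c - n) :> R by rewrite exprn_ge0 // invr_ge0.
lra.
Qed.

Lemma weight_ge0 x : 0 <= weight x.
Proof. by rewrite exprn_ge0 // invr_ge0. Qed.

Lemma weight_shift c x : (x <= c.+1)%N -> (c < L)%N ->
  weight x = 4 * weight c * 4^-1 ^+ (c.+1 - x).
Proof.
move=> xc cL; rewrite /weight -mulrA -exprD (_ : (L - c) + _ = (L - x).+1)%N; last by lia.
by rewrite exprS mulrA mulfV ?mul1r // pnatr_eq0.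
Qed.

Lemma odd_halves_le a : ((2 * a).+1)%:R * 4^-1 ^+ a <= 2 * 2^-1 ^+ a :> R.
Proof.
have -> : 4^-1 = 2^-1 * 2^-1 :> R by rewrite -invfM -natrM.
rewrite exprMn mulrA ler_wpM2r ?exprn_ge0 ?invr_ge0 //.
rewrite exprVn ler_pdivrMr ?exprn_gt0 // -natrX -natrM ler_nat.
by have := ltn_expl a (ltnSn 1); lia.
Qed.

Lemma successors_weight v : (v.1 < L)%N ->
  \sum_(w <- successors v) weight w.1 <= 16 * weight v.1.
Proof.
move=> vL; rewrite big_filter big_mkcond big_allpairs /=.
under eq_bigr => x _ do rewrite -big_mkcond big_const_seq iter_addr_0 /=.
pose g x : R := if (x <= v.1.+1)%N then 2^-1 ^+ (v.1.+1 - x) else 0.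
apply: (@le_trans _ _ (\sum_(x <- iota 0 L) 8 * weight v.1 * g x)).
  apply: ler_sum => x _; rewrite /g.
  apply: le_trans (ler_wpMn2l (weight_ge0 x) (count_blocks v x)) _.
  case: leqP => xv; last by rewrite mulr0n mulr0.
  rewrite -mulr_natl (weight_shift xv vL).
  have := odd_halves_le (v.1.+1 - x); have := weight_ge0 v.1; nra.
have := sum_halves_le v.1.+1 L; have := weight_ge0 v.1.
have : 2^-1 ^+ (v.1.+2 - L) <= 1 :> R by rewrite exprn_ile1 // ?invr_ge0 // invf_le1 ?ler1n.
rewrite -mulr_sumr; nra.
Qed.

Lemma crossings_weight (q : R) n v : 0 <= q <= 100^-1 -> (v.1 < L)%N ->
  \sum_(c <- crossings n v) q ^+ size c <= 20^-1 * weight v.1.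
Proof.
move=> /andP[q0 q1]; elim: n v => [|n IH] v vL /=.
  by rewrite big_nil mulr_ge0 ?weight_ge0 // invr_ge0.
rewrite big_cat big_allpairs_dep /=.
have end_le : \sum_(c <- if v.1.+1 == L then [:: [:: v]] else [::]) q ^+ size c
    <= 4 * q * weight v.1.
  case: eqP => [vL1|_]; last by rewrite big_nil !mulr_ge0 ?weight_ge0.
  by rewrite big_seq1 /weight -vL1 subSnn !expr1 mulrAC mulfV ?mul1r // pnatr_eq0.
have step_le : \sum_(w <- successors v) \sum_(c <- crossings n w) q ^+ size (v :: c)
    <= q * (20^-1 * (16 * weight v.1)).
  under eq_bigr => w _ do under eq_bigr => c _ do rewrite exprS.
  under eq_bigr => w _ do rewrite -mulr_sumr.
  rewrite -mulr_sumr ler_wpM2l //.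
  apply: (@le_trans _ _ (\sum_(w <- successors v) 20^-1 * weight w.1)).
    by rewrite big_seq [X in _ <= X]big_seq; apply: ler_sum => w /mem_successors /IH.
  by rewrite -mulr_sumr ler_wpM2l ?invr_ge0 // successors_weight.
have := weight_ge0 v.1; nra.
Qed.

Lemma weight0_mulrn_le : (20^-1 * weight 0) *+ (2 ^ L).+1 <= (2 ^ L)%:R^-1.
Proof.
have -> : forall x : R, x *+ (2 ^ L).+1 = x * ((2 ^ L)%:R + 1).
  by move=> x; rewrite natr1 mulr_natr.
have -> : weight 0 = (2 ^ L)%:R^-1 * (2 ^ L)%:R^-1.
  by rewrite /weight subn0 -invfM -natrM -expnMn exprVn natrX.
set X := (2 ^ L)%:R : R.
have X1 : 1 <= X by rewrite ler1n expn_gt0.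
have XY : X * X^-1 = 1 by rewrite mulfV // gt_eqF // (lt_le_trans ltr01).
have Y0 : 0 < X^-1 by rewrite invr_gt0 (lt_le_trans ltr01).
have Y1 : X^-1 <= 1 by rewrite invf_le1 // (lt_le_trans ltr01).
rewrite [leLHS](_ : _ = 20^-1 * (X * X^-1 * X^-1 + X^-1 * X^-1)); last by ring.
rewrite XY; nra.
Qed.

Lemma mem_crossings n v c : path blocks v c -> {subset v :: c <= sites} ->
  (last v c).1.+1 = L -> (size c < n)%N -> v :: c \in crossings n v.
Proof.
elim: c v n => [|w c IH] v [|n] //= pvc sub lastL cn.
  by rewrite lastL eqxx mem_head.
rewrite mem_cat; apply/orP; right; case/andP: pvc => vw pwc.
apply/allpairsPdep; exists w, (w :: c); split => //.
  by rewrite mem_filter vw sub // inE mem_head orbT.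
by apply: IH => // u uc; apply: sub; rewrite inE uc orbT.
Qed.

End Crossings.

Local Open Scope classical_set_scope.

Section MeasureUnion.
Context d (T : measurableType d) (R : realFieldType) (mu : {measure set T -> \bar R}).

Lemma le_mu_bigsetU_seq (I : Type) (s : seq I) (F : I -> set T) (B : set T) :
  measurable B -> (forall i, measurable (F i)) ->
  B `<=` \big[setU/set0]_(i <- s) F i -> (mu B <= \sum_(i <- s) mu (F i))%E.
Proof.
move=> mB mF; elim: s B mB => [|i s IH] B mB.
  by rewrite !big_nil subset0 => ->; rewrite measure0.
rewrite !big_cons => sub.
have mU : measurable (\big[setU/set0]_(j <- s) F j) by apply: bigsetU_measurable.
apply: le_trans (le_measure _ _ _ sub) _; rewrite ?inE //; first exact: measurableU.
apply: le_trans (measureU2 _ (mF i) mU) _.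
by rewrite leeD2l // IH.
Qed.

End MeasureUnion.

Section Independence.
Context d (T : measurableType d) (R : realType) (P : probability T R).
Variables (I : eqType) (A : I -> set T).
Hypothesis mA : forall i, measurable (A i).
Hypothesis indepA : mutually_independent P A.

Lemma mutually_independent_setIC (S U : seq I) : uniq (S ++ U) ->
  P (\big[setI/setT]_(k <- S) A k `&` \big[setI/setT]_(k <- U) ~` A k) =
  ((\prod_(k <- S) fine (P (A k))) * \prod_(k <- U) (1 - fine (P (A k))))%:E.
Proof.
elim: U S => [|u U IH] S.
  by rewrite cats0 !big_nil setIT mulr1; apply: indepA.
move=> uSU; have uuSU : uniq (u :: S ++ U).
  by rewrite -(perm_uniq (_ : perm_eq (S ++ [:: u] ++ U) _)) // perm_catCA.
set X := \big[setI/setT]_(k <- S) A k `&` \big[setI/setT]_(k <- U) ~` A k.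
have mX : measurable X.
  by apply: measurableI; apply: bigsetI_measurable => k _ //; apply: measurableC.
have XD : \big[setI/setT]_(k <- S) A k `&` \big[setI/setT]_(k <- u :: U) ~` A k = X `\` A u.
  by rewrite big_cons /X; apply/seteqP; split => w /=; tauto.
have XI : X `&` A u =
    \big[setI/setT]_(k <- u :: S) A k `&` \big[setI/setT]_(k <- U) ~` A k.
  by rewrite big_cons /X; apply/seteqP; split => w /=; tauto.
have PX : (P X < +oo)%E by rewrite (le_lt_trans (probability_le1 P mX)) ?ltry.
have PXu : P (X `&` A u) =
    ((\prod_(k <- u :: S) fine (P (A k))) * \prod_(k <- U) (1 - fine (P (A k))))%:E.
  by rewrite XI; apply: IH.
have PXe : P X = ((\prod_(k <- S) fine (P (A k))) * \prod_(k <- U) (1 - fine (P (A k))))%:E.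
  by apply: IH; case/andP: uuSU.
have PXD : P (X `\` A u) = (P X - P (X `&` A u))%E by apply: measureD.
rewrite XD PXD PXu PXe -EFinB.
by congr EFin; rewrite !big_cons; ring.
Qed.

Lemma mutually_independent_bigcapC_le (p : R) (U : seq I) : uniq U ->
  (forall k, (p%:E <= P (A k))%E) ->
  (P (\big[setI/setT]_(k <- U) ~` A k) <= ((1 - p) ^+ size U)%:E)%E.
Proof.
move=> uU pA; have := @mutually_independent_setIC [::] U uU.
rewrite !big_nil setTI mul1r => ->; rewrite lee_fin.
rewrite -[size U]count_predT -iter_mulr_1 -big_const_seq ler_prod // => k _.
have := probability_le1 P (mA k); have := pA k.
by case: (P (A k)) => [x||] //=; rewrite !lee_fin; lra.
Qed.

End Independence.

Section IncidentColumns.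
Variables (T : Type) (n : nat) (A : 'I_n.+2 -> nat -> set T) (w : T).

Definition alive_col x s := incident A w (inord x) s.
Definition good_col x s := A (inord x) s w.

Lemma alive_col_succ x s : (x < n.+2)%N -> alive_col x s.+1 <->
  exists y, [/\ (y <= x.+1)%N, (x <= y.+1)%N & open_site n.+2 alive_col good_col y s].
Proof.
move=> xL; rewrite /alive_col /=; split.
  case=> i [ni [ii ai]]; exists i; move: ni; rewrite /near1 inordK // => /andP[? ?].
  by split => //; split; rewrite /alive_col /good_col ?inord_val.
case=> y [y1 y2 [yL ay gy]]; exists (inord y).
by rewrite /near1 !inordK // y1 y2.
Qed.

End IncidentColumns.

Section Reach.
Variables (R : realType) (T : Type) (L : nat) (A : 'I_L -> nat -> set T).

Lemma incident_open_path w i t : incident A w i t ->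
  exists (x : vertex L) (s : seq (vertex L)), [/\ x.2 = 0%N, last x s = (i, t) &
    forall k, (k < size s)%N -> open_edge A w (nth x (x :: s) k) (nth x s k)].
Proof.
elim: t i => [|t IH] i; first by exists (i, 0%N), [::].
case=> j [ji [ij aj]]; have [x [s [x0 xs es]]] := IH j ij.
exists x, (rcons s (i, t.+1)); split => //; first by rewrite last_rcons.
move=> k; rewrite size_rcons ltnS leq_eqVlt => /orP[/eqP ->|ks].
  rewrite nth_rcons ltnn eqxx -rcons_cons nth_rcons /= ltnSn nth_last /= xs.
  by right; left.
by rewrite nth_rcons ks -rcons_cons nth_rcons /= ltnS (ltnW ks); apply: es.
Qed.

Lemma reachesE : reaches R A =
  \bigcup_(t in [set t : nat | (101 / 100 : R) ^+ L <= t%:R])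
    [set w | exists i, incident A w i t].
Proof.
apply/seteqP; split => w; last first.
  move=> [t /= tL [i /incident_open_path [x [s [x0 xs es]]]]].
  by exists x, s; rewrite xs.
move=> [x [s [x0 [xL es]]]].
have t_gt0 : (0 < (last x s).2)%N.
  by rewrite -(ltr0n R); apply: lt_le_trans xL; rewrite exprn_gt0.
case: s es xL t_gt0 => [|v s] es xL t_gt0; first by rewrite /= x0 in t_gt0.
set z := last x (v :: s) in xL t_gt0 *; set u := nth x (x :: v :: s) (size s).
exists z.2 => //; exists z.1.
have := es (size s) (ltnSn _); rewrite (_ : nth x (v :: s) (size s) = z); last by rewrite nth_last.
case=> [[_ [z0 _]]|[[-> oz]|[_ [_ [iz _]]]]]; [by rewrite z0 in t_gt0 | by exists u.1 | exact: iz].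
Qed.

End Reach.

Section Measurability.
Context d (T : measurableType d) (L : nat) (A : 'I_L -> nat -> set T).
Hypothesis mA : forall i t, measurable (A i t).

Lemma incident_measurable i t : measurable [set w | incident A w i t].
Proof.
elim: t i => [|t IH] i /=.
  case: ltnP => _; [rewrite (_ : [set _ | _] = setT) | rewrite (_ : [set _ | _] = set0)] => //;
    by apply/seteqP; split.
rewrite (_ : [set _ | _] = \bigcup_(j in [set j | near1 j i]) ([set w | incident A w j t] `&` A j t)).
  by apply: fin_bigcup_measurable => [|j _]; [exact: finite_finset | apply: measurableI].
by apply/seteqP; split => w /= [j]; [move=> [ji [ij aj]] | move=> ji [ij aj]]; exists j.
Qed.

Lemma alive_measurable t : measurable [set w | exists i, incident A w i t].
Proof.
rewrite (_ : [set _ | _] = \bigcup_(i in setT) [set w | incident A w i t]).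
  by apply: fin_bigcup_measurable => [|i _]; [exact: finite_finset | apply: incident_measurable].
by apply/seteqP; split => w /= [i]; exists i.
Qed.

Lemma reaches_measurable (R : realType) : measurable (reaches R A).
Proof. by rewrite reachesE; apply: bigcup_measurable => t _; apply: alive_measurable. Qed.

End Measurability.

Section Survival.
Context d (T : measurableType d) (R : realType) (P : probability T R).
Variables (n : nat) (A : 'I_n.+2 -> nat -> set T).
Hypothesis mA : forall i t, measurable (A i t).
Hypothesis indepA : mutually_independent P (fun v : vertex n.+2 => A v.1 v.2).
Hypothesis pA : forall i t, ((99 / 100 : R)%:E <= P (A i t))%E.

Local Notation L := n.+2.
Local Notation horizon := (2 ^ L)%N.
Local Notation alive_at t := [set w | exists i : 'I_L, incident A w i t].

Definition site_vertex (v : nat * nat) : vertex L := (inord v.1, v.2).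
Definition closed_along (c : seq (nat * nat)) : set T :=
  \big[setI/setT]_(v <- map site_vertex c) ~` A v.1 v.2.
Definition crossing_family :=
  [seq c <- flatten [seq crossings L horizon.+1 (L * horizon.+1) (0, s) | s <- iota 0 horizon.+1]
     | uniq (map site_vertex c)].

Lemma extinct_sub_crossings :
  ~` alive_at horizon `<=` \big[setU/set0]_(c <- crossing_family) closed_along c.
Proof.
move=> w /= extinct; rewrite -bigcup_seq.
have dead_col x : (x < L)%N -> ~ alive_col A w x horizon.
  by move=> _ ax; apply: extinct; exists (inord x).
have [c0 [c [c00 cL pc uc cc]]] :=
  extinct_crossing (fun _ _ => isT) (@alive_col_succ _ _ A w) (ltn0Sn _) dead_col.
have c_sites : {subset c0 :: c <= sites L horizon.+1}.
  by move=> v /cc [[vL _] vt]; apply: mem_sites.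
exists (c0 :: c); last first.
  rewrite /closed_along -bigcap_seq => u us.
  have /mapP [v /cc [[_ gv] _] ->] : u \in map site_vertex (c0 :: c) := us.
  exact: gv.
rewrite /= mem_filter; apply/andP; split.
  rewrite map_inj_in_uniq // => u v /cc[[uL _] _] /cc[[vL _] _] [/(congr1 val)].
  rewrite /= !inordK // => uv uv2.
  by rewrite [u]surjective_pairing [v]surjective_pairing uv uv2.
apply/flatten_mapP; exists c0.2; first by have [_ c0t] := cc _ (mem_head _ _); rewrite mem_iota.
have e0 : (0%N, c0.2) = c0 by move: c00; case: (c0) => /= ? ? ->.
rewrite e0; apply: mem_crossings => //; first by rewrite cL.
by have := uniq_leq_size uc c_sites; rewrite size_sites.
Qed.

Lemma extinction_le : (P (~` alive_at horizon) <= ((2 ^ L)%:R^-1)%:E)%E.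
Proof.
have mclosed c : measurable (closed_along c).
  by apply: bigsetI_measurable => v _; apply/measurableC/mA.
apply: le_trans (le_mu_bigsetU_seq P _ mclosed extinct_sub_crossings) _.
  exact/measurableC/alive_measurable.
apply: (@le_trans _ _ (\sum_(c <- crossing_family) ((1 - 99 / 100 : R) ^+ size c)%:E)).
  rewrite big_seq [leRHS]big_seq; apply: lee_sum => c; rewrite mem_filter => /andP[uc _].
  rewrite -(size_map site_vertex).
  exact: (mutually_independent_bigcapC_le (fun v => mA v.1 v.2) indepA uc (fun v => pA v.1 v.2)).
rewrite sumEFin lee_fin big_filter big_mkcond /=.
apply: (@le_trans _ _ (\sum_(c <- flatten [seq crossings L horizon.+1 (L * horizon.+1) (0, s)
    | s <- iota 0 horizon.+1]) (1 - 99 / 100 : R) ^+ size c)).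
  by apply: ler_sum => c _; case: ifP => // _; rewrite exprn_ge0 //; lra.
rewrite big_flatten big_map.
apply: (@le_trans _ _ (\sum_(s <- iota 0 horizon.+1) 20^-1 * weight R L 0)).
  by apply: ler_sum => s _; apply: crossings_weight => //; apply/andP; split; lra.
by rewrite big_const_seq count_predT size_iota iter_addr_0 weight0_mulrn_le.
Qed.

Lemma survival_ge : ((1 - (2 ^ L)%:R^-1)%:E <= P (reaches R A))%E.
Proof.
have mE : measurable (alive_at horizon) by apply: alive_measurable.
have sub : alive_at horizon `<=` reaches R A.
  rewrite reachesE => w aw; exists horizon => //=.
  by rewrite natrX lerXn2r ?nnegrE //; lra.
apply: (@le_trans _ _ (P (alive_at horizon))); last first.
  by apply: le_measure; rewrite ?inE //; apply: reaches_measurable.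
have PE1 : (P (alive_at horizon) <= 1)%E by apply: probability_le1.
have PEC : P (~` alive_at horizon) = (1 - P (alive_at horizon))%E by apply: probability_setC.
move: extinction_le PE1; rewrite PEC.
by case: (P _) => [x||] //=; rewrite !lee_fin; lra.
Qed.

End Survival.

Theorem lemma4p5 (R : realType) (eps : R) (heps : 0 < eps) :
  exists L0 : nat, forall L : nat, (L0 <= L)%N ->
  forall (d : measure_display) (T : measurableType d) (P : probability T R)
         (A : 'I_L -> nat -> set T),
    (forall i t, measurable (A i t)) ->
    mutually_independent P (fun it : vertex L => A it.1 it.2) ->
    (forall i t, ((99 / 100 : R)%:E <= P (A i t))%E) ->
    ((1 - eps)%:E <= P (@reaches R T L A))%E.
Proof.
have eps_lt : eps^-1 < (Num.Def.archi_bound eps^-1)%:R.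
  by apply: archi_boundP; rewrite invr_ge0 ltW.
exists (Num.Def.archi_bound eps^-1).+2 => -[|[|n]] // hL d T P A mA indepA pA.
apply: le_trans (survival_ge mA indepA pA); rewrite lee_fin lerD2l lerN2.
rewrite -[leRHS]invrK lef_pV2 ?posrE ?invr_gt0 ?ltr0n ?expn_gt0 //.
apply: ltW (lt_le_trans eps_lt _); rewrite ler_nat.
by apply: leq_trans (ltnW (ltn_expl _ (ltnSn 1))); lia.
Qed.
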